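(* Let $G$ be a pseudoforest, let $\tau=\tau_A$ with $A=\binom{a\ b}{c\ d}$ be a 2-switch on $G$, and let $U$ and $U'$ be different unicyclic components of $G$ such that $ab\in E(\operatorname{Forest}(U))$ and $cd\in E(\operatorname{Forest}(U'))$. Then $\tau$ is a p-switch over $G$ if and only if $\tau'=\tau_{A'}$ with $A'=\binom{a\ b}{d\ c}$ is not a p-switch over $G$.
   Context: Graphs are finite, simple, undirected, labeled. A unicyclic graph is a connected graph with exactly one cycle; a pseudoforest is a graph each of whose components is a tree or a unicyclic graph. For vertices $a,b,c,d$, $A=\binom{a\ b}{c\ d}$ is interchangeable in $G$ if $ab,cd\in E(G)$, $\{a,b\}\cap\{c,d\}=\varnothing$, $ac,bd\notin E(G)$; the 2-switch $\tau_A$ sends $G$ to $G-ab-cd+ac+bd$ if $A$ is interchangeable and to $G$ otherwise (trivial). A nontrivial 2-switch $\tau$ over a pseudoforest $G$ is a p-switch if $\tau(G)$ is a pseudoforest. $\operatorname{Cycles}(H)$ is the subgraph induced by vertices lying on some cycle of $H$; $\operatorname{Forest}(H)=H-E(\operatorname{Cycles}(H))$. *)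

(* Finite simple undirected labeled graphs on a finType T,
   represented by a symmetric irreflexive relation g : rel T. *)
From mathcomp Require Import all_boot.
Set Implicit Arguments. Unset Strict Implicit. Unset Printing Implicit Defensive.

Section Graphs.
Variable T : finType.

Definition simple_graph (g : rel T) : Prop := symmetric g /\ irreflexive g.

Definition induced (g : rel T) (S : {set T}) : rel T :=
  fun x y => [&& x \in S, y \in S & g x y].

Definition is_gcycle (g : rel T) (c : seq T) : Prop :=
  [/\ cycle g c, uniq c & 2 < size c].

Definition cycle_edges (c : seq T) : {set T * T} :=
  [set p | [exists x in c, (p == (x, next c x)) || (p == (next c x, x))]].

(* the cycle subgraphs of g are identified by their edge sets *)
Definition unique_cycle (g : rel T) : Prop :=
  exists c, is_gcycle g c /\
    forall c', is_gcycle g c' -> cycle_edges c' = cycle_edges c.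

Definition acyclic (g : rel T) : Prop := forall c, ~ is_gcycle g c.

Definition connected_on (g : rel T) (S : {set T}) : Prop :=
  {in S &, forall x y, connect (induced g S) x y}.

Definition component (g : rel T) (S : {set T}) : Prop :=
  exists x, S = [set y | connect g x y].

Definition tree_on (g : rel T) (S : {set T}) : Prop :=
  connected_on g S /\ acyclic (induced g S).

Definition unicyclic_on (g : rel T) (S : {set T}) : Prop :=
  connected_on g S /\ unique_cycle (induced g S).

Definition pseudoforest (g : rel T) : Prop :=
  simple_graph g /\
  forall S, component g S -> tree_on g S \/ unicyclic_on g S.

Definition on_cycle (h : rel T) (v : T) : Prop :=
  exists c, is_gcycle h c /\ v \in c.

(* xy is an edge of Forest(H), H the induced subgraph on U:
   an edge of H not in E(Cycles(H)), where Cycles(H) is induced by the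
   vertices on cycles of H *)
Definition forest_edge (g : rel T) (U : {set T}) (x y : T) : Prop :=
  induced g U x y /\ ~ (on_cycle (induced g U) x /\ on_cycle (induced g U) y).

Definition interchangeable (g : rel T) (a b c d : T) : bool :=
  [&& g a b, g c d, a != c, a != d, b != c, b != d, ~~ g a c & ~~ g b d].

Definition same_pair (x y u v : T) : bool :=
  ((x == u) && (y == v)) || ((x == v) && (y == u)).

Definition two_switch (g : rel T) (a b c d : T) : rel T :=
  if interchangeable g a b c d then
    fun x y => (g x y && ~~ same_pair x y a b && ~~ same_pair x y c d)
               || same_pair x y a c || same_pair x y b d
  else g.

Definition p_switch (g : rel T) (a b c d : T) : Prop :=
  interchangeable g a b c d /\ pseudoforest (two_switch g a b c d).

End Graphs.

From mathcomp Require Import all_boot.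
From Stdlib Require Import Classical.
Set Implicit Arguments. Unset Strict Implicit. Unset Printing Implicit Defensive.

(* Let g0 be G minus the edges ab and cd.  Forest edges are bridges, so U splits in g0 into
   the part of a and the part of b, exactly one of which carries the cycle of U; likewise
   U' splits into the parts of c and d.  The switch adds ac and bd, which are again bridges,
   so tau(G) has exactly the cycles of G, and it is a pseudoforest iff the cycles of U and
   U' stay in different components, i.e. iff exactly one of a, c lies on the cycle side.
   Exchanging c and d exchanges the two sides of U', so exactly one of tau_A, tau_A' is a
   p-switch. *)

Section Generic.
Variable T : finType.
Implicit Types (h e : rel T) (S : {set T}) (s : seq T) (x y z u v p q : T).

Lemma same_pairC x y u v : same_pair x y u v = same_pair x y v u.
Proof. by rewrite /same_pair orbC. Qed.

Lemma same_pair_sym x y u v : same_pair x y u v = same_pair y x u v.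
Proof. by rewrite /same_pair andbC orbC andbC. Qed.

Lemma same_pair_refl x y : same_pair x y x y.
Proof. by rewrite /same_pair !eqxx. Qed.

Lemma same_pair_loop u p q : same_pair u u p q -> p = q.
Proof. by case/orP => /andP[/eqP <- /eqP <-]. Qed.

Lemma same_pair_notin u v p q S : u \notin S -> p \in S -> q \in S -> ~~ same_pair u v p q.
Proof. by move=> uS pS qS; apply/negP => /orP[] /andP[/eqP uE _]; rewrite uE ?pS ?qS in uS. Qed.

Definition del_edge h p q : rel T := fun u v => h u v && ~~ same_pair u v p q.

Lemma del_edgeC h p q : del_edge h q p =2 del_edge h p q.
Proof. by move=> u v; rewrite /del_edge same_pairC. Qed.

Lemma sym_del_edge h p q : symmetric h -> symmetric (del_edge h p q).
Proof. by move=> symh u v; rewrite /del_edge symh same_pair_sym. Qed.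

Lemma sub_gcycle e h s : subrel e h -> is_gcycle e s -> is_gcycle h s.
Proof. by move=> eh [cyc us ss]; split=> //; apply: sub_cycle cyc. Qed.

Lemma gcycle_head h s : is_gcycle h s -> exists x, x \in s.
Proof. by case: s => [[]|x s _] //; exists x; apply: mem_head. Qed.

Lemma gcycle_next_connect h s x : is_gcycle h s -> x \in s ->
  connect (del_edge h x (next s x)) (next s x) x.
Proof.
case=> cyc us ss /rot_to[i q rot_s].
(* After rotation s = x :: y :: w :: t, and the arc y, w, .., t, x avoids the edge xy. *)
have size_q := size_rot i s; rewrite rot_s in size_q.
rewrite -(next_rot i us) rot_s.
case: q rot_s size_q => [|y [|w t]] rot_s size_q; try by rewrite -size_q in ss.
have := rot_cycle i h s; rewrite cyc rot_s /= => /and3P[_ hyw path_w].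
have := rot_uniq i s; rewrite us rot_s /= !inE !negb_or => /andP[/and3P[xy xw xt]].
move=> /and3P[/andP[yw yt] _ _].
rewrite eqxx; apply/connectP; exists (w :: rcons t x); last by rewrite /= last_rcons.
have sub_y : {in predC1 y &, subrel h (del_edge h x y)}.
  by move=> u v /= uy vy huv; rewrite /del_edge huv /same_pair (negbTE uy) (negbTE vy) !andbF.
rewrite /=; apply/andP; split.
  by rewrite /del_edge hyw /same_pair (eq_sym y x) (negbTE xy) (eq_sym w x) (negbTE xw) !andbF.
apply: (sub_in_path sub_y _ path_w).
apply/allP => z; rewrite in_cons mem_rcons in_cons /=.
by case/or3P => [/eqP-> | /eqP-> | zt]; [rewrite eq_sym | | apply: contraNneq yt => <-].
Qed.

Lemma gcycle_edge_closed h s x p q (P : pred T) : is_gcycle h s -> x \in s ->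
  same_pair x (next s x) p q -> closed (del_edge h p q) P -> P p = P q.
Proof.
move=> cyc_s xs pq_next clP; have := gcycle_next_connect cyc_s xs.
case/orP: pq_next => /andP[/eqP-> /eqP->].
  by move/(closed_connect clP).
by rewrite (eq_connect (del_edgeC h p q)) => /(closed_connect clP).
Qed.

Lemma mem_component h S x y : symmetric h -> component h S -> x \in S ->
  (y \in S) = connect h x y.
Proof.
move=> symh [x0 ->]; rewrite !inE => x0x.
by rewrite (same_connect (sym_connect_sym symh) x0x).
Qed.

Lemma component_closed h S : symmetric h -> component h S -> closed h S.
Proof.
move=> symh [x0 ->] u v huv; rewrite !inE.
exact: (connect_closed (sym_connect_sym symh) x0 huv).
Qed.

Lemma component_disjoint h S S' x : symmetric h -> component h S -> component h S' ->
  S != S' -> x \in S -> x \notin S'.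
Proof.
move=> symh compS compS' neqS xS; apply: contra neqS => xS'; apply/eqP/setP => y.
by rewrite (mem_component y symh compS xS) (mem_component y symh compS' xS').
Qed.

Lemma connect_induced h S x y : symmetric h -> component h S -> x \in S ->
  connect h x y -> connect (induced h S) x y.
Proof.
move=> symh compS xS /connectP[p path_p ->].
have allS : all (mem S) (x :: p).
  apply/allP => z zp /=; rewrite (mem_component z symh compS xS).
  exact: path_connect path_p _ zp.
apply/connectP; exists p => //.
by apply: sub_in_path _ allS path_p => u v uS vS huv; rewrite /induced uS vS huv.
Qed.

Lemma gcycle_component h S s x : symmetric h -> component h S -> is_gcycle h s ->
  x \in s -> x \in S -> {subset s <= S} /\ is_gcycle (induced h S) s.
Proof.
move=> symh compS [cyc us ss] xs xS.
have sS : {subset s <= S}.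
  by move=> z zs; rewrite (mem_component z symh compS xS) (connect_cycle cyc xs zs).
split=> //; split=> //.
apply: (sub_in_cycle (P := mem S)) cyc; last by apply/allP.
by move=> u v uS vS huv; rewrite /induced uS vS huv.
Qed.

Lemma gcycle_induced h S s : is_gcycle (induced h S) s ->
  is_gcycle h s /\ {subset s <= S}.
Proof.
move=> cyc_s; case: (cyc_s) => cyc _ _; split.
  by apply: sub_gcycle cyc_s => u v /and3P[].
by move=> z zs; have /and3P[] := next_cycle cyc zs.
Qed.

Lemma cycle_edges_mem s s' x : cycle_edges s = cycle_edges s' -> x \in s -> x \in s'.
Proof.
move=> eq_edges xs.
have : (x, next s x) \in cycle_edges s.
  by rewrite inE; apply/existsP; exists x; rewrite xs eqxx.
rewrite eq_edges inE => /existsP[y /andP[ys /orP[/eqP[-> _] | /eqP[-> _]]]] //.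
by rewrite mem_next.
Qed.

Definition one_cycle_per_component h : Prop :=
  forall s s' x y, is_gcycle h s -> is_gcycle h s' -> x \in s -> y \in s' ->
    connect h x y -> cycle_edges s = cycle_edges s'.

Lemma pseudoforestP h :
  pseudoforest h <-> simple_graph h /\ one_cycle_per_component h.
Proof.
split=> [[[symh irrh] pf_h] | [[symh irrh] one_h]].
  split=> // s s' x y cyc_s cyc_s' xs ys' cxy.
  pose S := [set z | connect h x z].
  have compS : component h S by exists x.
  have [xS yS] : x \in S /\ y \in S by rewrite !inE connect0.
  have [_ ind_s] := gcycle_component symh compS cyc_s xs xS.
  have [_ ind_s'] := gcycle_component symh compS cyc_s' ys' yS.
  case: (pf_h S compS) => [[_ acyc] | [_ [s0 [_ uniq_s0]]]]; first by case: (acyc s).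
  by rewrite (uniq_s0 _ ind_s) (uniq_s0 _ ind_s').
split=> // S compS.
have conn_S : connected_on h S.
  move=> y z yS zS; apply: (connect_induced symh compS yS).
  by rewrite -(mem_component z symh compS yS).
case: (classic (exists s, is_gcycle (induced h S) s)) => [[s0 ind_s0] | no_cycle].
  right; split=> //; exists s0; split=> // s ind_s.
  have [cyc_s0 s0S] := gcycle_induced ind_s0; have [cyc_s sS] := gcycle_induced ind_s.
  have [x xs0] := gcycle_head cyc_s0; have [y ys] := gcycle_head cyc_s.
  apply: (one_h s s0 y x cyc_s cyc_s0 ys xs0).
  by rewrite -(mem_component x symh compS (sS y ys)) s0S.
by left; split=> // s ind_s; apply: no_cycle; exists s.
Qed.

Lemma forest_edgeC h S x y : symmetric h -> forest_edge h S x y -> forest_edge h S y x.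
Proof.
move=> symh [/and3P[xS yS hxy] not_cyc]; split; first by rewrite /induced xS yS symh.
by case=> cyc_y cyc_x; apply: not_cyc.
Qed.

Lemma forest_edge_not_on_cycle h S p q s x : symmetric h -> component h S ->
  forest_edge h S p q -> is_gcycle h s -> x \in s -> ~~ same_pair x (next s x) p q.
Proof.
move=> symh compS [/and3P[pS qS _] not_cyc] cyc_s xs; apply/negP => pq_next.
have [ps qs] : p \in s /\ q \in s.
  by case/orP: pq_next => /andP[/eqP <- /eqP <-]; rewrite mem_next.
have [_ ind_s] := gcycle_component symh compS cyc_s ps pS.
by apply: not_cyc; split; exists s.
Qed.

Lemma forest_edge_bridge h S x y e : simple_graph h -> component h S ->
  forest_edge h S x y -> subrel e (del_edge h x y) -> ~~ connect e x y.
Proof.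
move=> [symh irrh] compS [/and3P[xS yS hxy] not_cyc] e_del.
have e_h : subrel e h by move=> u v /e_del /andP[].
apply/negP => /connectP[p path_p y_last]; move: y_last.
case/shortenP: path_p => p' path_p' uniq_p' _.
case: p' path_p' uniq_p' => [|z [|z' q]] path_p' uniq_p' /= y_last.
- by move: hxy; rewrite y_last irrh.
- by move: path_p' => /= /andP[/e_del /andP[_]]; rewrite -y_last same_pair_refl.
have cyc : is_gcycle h [:: x, z, z' & q].
  by split=> //; rewrite /cycle rcons_path (sub_path e_h path_p') /= -y_last symh.
have [_ ind] := gcycle_component symh compS cyc (mem_head _ _) xS.
have yc : y \in [:: x, z, z' & q] by rewrite y_last (in_cons x) (in_cons z) mem_last !orbT.
by apply: not_cyc; split; exists [:: x, z, z' & q]; rewrite ?mem_head.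
Qed.

Lemma component_connect_endpoint h S x y e : symmetric h -> component h S -> x \in S ->
  (forall u v, h u v -> u \in S -> e u v || same_pair u v x y) ->
  {in S, forall z, connect e x z || connect e y z}.
Proof.
move=> symh compS xS h_e z zS.
pose reach := [pred w | (w \notin S) || connect e x w || connect e y w].
have cl : closed h reach.
  apply: (intro_closed (sym_connect_sym symh)) => u v huv; rewrite !inE.
  rewrite -(component_closed symh compS huv); case: (boolP (u \in S)) => //= uS.
  case/orP: (h_e _ _ huv uS) => [euv | /orP[] /andP[_ /eqP->]]; rewrite ?connect0 ?orbT //.
  by case/orP=> reach_u; apply/orP; [left | right]; apply: connect_trans reach_u (connect1 euv).
have cxz : connect h x z by rewrite -(mem_component z symh compS xS).
by have := closed_connect cl cxz; rewrite !inE zS connect0 orbT /= => <-.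
Qed.

End Generic.

Section SwitchAcrossComponents.
Variables (T : finType) (g : rel T) (a b c d : T) (U U' : {set T}).
Hypotheses (pf_g : pseudoforest g) (compU : component g U) (compU' : component g U')
  (neqUU' : U != U') (fe_ab : forest_edge g U a b) (fe_cd : forest_edge g U' c d).

Local Notation g0 := (del_edge (del_edge g a b) c d).
Local Notation tau := (two_switch g a b c d).

Let simple_g : simple_graph g. Proof. by case: pf_g. Qed.
Let sym_g : symmetric g. Proof. by case: simple_g. Qed.
Let aU : a \in U. Proof. by case: fe_ab => /and3P[]. Qed.
Let bU : b \in U. Proof. by case: fe_ab => /and3P[]. Qed.
Let cU' : c \in U'. Proof. by case: fe_cd => /and3P[]. Qed.
Let dU' : d \in U'. Proof. by case: fe_cd => /and3P[]. Qed.

Let notU' x : x \in U -> x \notin U'.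
Proof. exact: component_disjoint sym_g compU compU' neqUU'. Qed.

Let notU x : x \in U' -> x \notin U.
Proof. by move=> xU'; apply/negP => /notU'; rewrite xU'. Qed.

Let disconnected_UU' x y : x \in U -> y \in U' -> ~~ connect g x y.
Proof. by move=> xU yU'; rewrite -(mem_component y sym_g compU xU) notU. Qed.

Let g0_sub : subrel g0 g. Proof. by move=> u v /andP[/andP[]]. Qed.

Let sym_g0 : symmetric g0. Proof. exact/sym_del_edge/sym_del_edge. Qed.

Let connect_sym_g0 : connect_sym g0. Proof. exact: sym_connect_sym sym_g0. Qed.

Lemma connect_g0_UU' x y : x \in U -> y \in U' -> connect g0 x y = false.
Proof.
move=> xU yU'; apply/negbTE; apply: contra (disconnected_UU' xU yU').
by apply: connect_sub => u v /g0_sub /connect1.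
Qed.

Lemma connect_g0_U'U x y : x \in U' -> y \in U -> connect g0 x y = false.
Proof. by move=> xU' yU; rewrite connect_sym_g0 connect_g0_UU'. Qed.

Lemma connect_g0_ab : connect g0 a b = false.
Proof. by apply/negbTE/(forest_edge_bridge simple_g compU fe_ab) => u v /andP[]. Qed.

Lemma connect_g0_cd : connect g0 c d = false.
Proof.
apply/negbTE/(forest_edge_bridge simple_g compU' fe_cd).
by move=> u v /andP[/andP[guv _] not_cd]; rewrite /del_edge guv.
Qed.

Lemma connect_g0_a_or_b x : x \in U -> connect g0 a x || connect g0 b x.
Proof.
apply: (component_connect_endpoint sym_g compU aU) => u v guv uU.
rewrite /del_edge guv (same_pair_notin v (notU' uU) cU' dU') andbT /=.
by case: (same_pair u v a b).
Qed.

Lemma connect_g0_dE x : x \in U' -> connect g0 d x = ~~ connect g0 c x.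
Proof.
move=> xU'.
have : connect g0 c x || connect g0 d x.
  apply: (component_connect_endpoint sym_g compU' cU') xU' => u v guv uU'.
  rewrite /del_edge guv (same_pair_notin v (notU uU') aU bU) /=.
  by case: (same_pair u v c d).
case c_x: (connect g0 c x) => //= _; apply/negP => d_x.
by move: connect_g0_cd; rewrite (connect_trans c_x _) // connect_sym_g0.
Qed.

Lemma interchangeable_across : interchangeable g a b c d.
Proof.
have neq x y : x \in U -> y \in U' -> x != y.
  by move=> xU yU'; apply: contraNneq (disconnected_UU' xU yU') => ->.
have not_adj x y : x \in U -> y \in U' -> ~~ g x y.
  by move=> xU yU'; apply: contraNN (disconnected_UU' xU yU'); apply: connect1.
have [/and3P[_ _ gab] _] := fe_ab; have [/and3P[_ _ gcd] _] := fe_cd.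
by rewrite /interchangeable gab gcd !neq ?not_adj.
Qed.

Lemma two_switchE u v :
  tau u v = g0 u v || same_pair u v a c || same_pair u v b d.
Proof. by rewrite /two_switch interchangeable_across. Qed.

Lemma simple_two_switch : simple_graph tau.
Proof.
have [_ irr_g] := simple_g.
split=> [u v | u]; first by rewrite !two_switchE sym_g0 same_pair_sym (same_pair_sym u v).
rewrite two_switchE /del_edge irr_g /=; apply/negbTE/negP.
case/orP=> /same_pair_loop eq_pq.
  by have := disconnected_UU' aU cU'; rewrite eq_pq connect0.
by have := disconnected_UU' bU dU'; rewrite eq_pq connect0.
Qed.

Let connect_sym_tau : connect_sym tau.
Proof. exact: sym_connect_sym simple_two_switch.1. Qed.

Let connect_g0_tau : subrel (connect g0) (connect tau).
Proof. by apply: connect_sub => u v g0uv; apply: connect1; rewrite two_switchE g0uv. Qed.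

Lemma gcycle_del_forest_edges s : is_gcycle g s -> is_gcycle g0 s.
Proof.
move=> cyc_s; case: (cyc_s) => cyc us ss; split=> //.
apply: (cycle_from_next us) => x xs.
rewrite /del_edge (next_cycle cyc xs) (forest_edge_not_on_cycle sym_g compU fe_ab cyc_s xs).
by rewrite (forest_edge_not_on_cycle sym_g compU' fe_cd cyc_s xs).
Qed.

Lemma two_switch_closed_ac : closed (del_edge tau a c) (connect g0 a).
Proof.
move=> u v /andP[]; rewrite two_switchE => /orP[/orP[g0uv | ac_uv] | bd_uv] not_ac.
- exact: (same_connect1r connect_sym_g0 g0uv).
- by rewrite ac_uv in not_ac.
- by case/orP: bd_uv => /andP[/eqP-> /eqP->]; rewrite !inE connect_g0_ab connect_g0_UU'.
Qed.

Lemma two_switch_closed_bd : closed (del_edge tau b d) (connect g0 b).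
Proof.
move=> u v /andP[]; rewrite two_switchE => /orP[/orP[g0uv | ac_uv] | bd_uv] not_bd.
- exact: (same_connect1r connect_sym_g0 g0uv).
- case/orP: ac_uv => /andP[/eqP-> /eqP->];
    by rewrite !inE (connect_sym_g0 b a) connect_g0_ab connect_g0_UU'.
- by rewrite bd_uv in not_bd.
Qed.

Lemma gcycle_two_switch s : is_gcycle tau s <-> is_gcycle g s.
Proof.
split=> [cyc_s | /gcycle_del_forest_edges]; last first.
  by apply: sub_gcycle => u v g0uv; rewrite two_switchE g0uv.
apply: (sub_gcycle g0_sub); case: (cyc_s) => cyc us ss; split=> //.
apply: (cycle_from_next us) => x xs; have := next_cycle cyc xs.
rewrite two_switchE => /orP[/orP[// | ac_next] | bd_next].
- have := gcycle_edge_closed cyc_s xs ac_next two_switch_closed_ac.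
  by rewrite connect0 connect_g0_UU'.
- have := gcycle_edge_closed cyc_s xs bd_next two_switch_closed_bd.
  by rewrite connect0 connect_g0_UU'.
Qed.

Definition side x := connect g0 a x || connect g0 c x.

Lemma sideU x : x \in U -> side x = connect g0 a x.
Proof. by move=> xU; rewrite /side (connect_g0_U'U cU' xU) orbF. Qed.

Lemma sideU' x : x \in U' -> side x = connect g0 c x.
Proof. by move=> xU'; rewrite /side (connect_g0_UU' aU xU'). Qed.

Lemma connect_g0_on_cycle x y : on_cycle g x -> on_cycle g y ->
  connect g x y -> connect g0 x y.
Proof.
move=> [s [cyc_s xs]] [s' [cyc_s' ys']] cxy.
have [_ one_g] := (pseudoforestP g).1 pf_g.
have ys : y \in s := cycle_edges_mem (esym (one_g _ _ _ _ cyc_s cyc_s' xs ys' cxy)) ys'.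
by case: (gcycle_del_forest_edges cyc_s) => cyc _ _; exact: (connect_cycle cyc xs ys).
Qed.

Lemma side_on_cycle x y : on_cycle g x -> on_cycle g y -> connect g x y ->
  side x = side y.
Proof.
move=> cyc_x cyc_y /(connect_g0_on_cycle cyc_x cyc_y) c0xy.
by rewrite /side !(same_connect_r connect_sym_g0 c0xy).
Qed.

Lemma connect_two_switch_side x : x \in U :|: U' ->
  connect tau x (if side x then a else b).
Proof.
have tau_ca : tau c a by rewrite two_switchE /same_pair !eqxx !orbT.
have tau_db : tau d b by rewrite two_switchE /same_pair !eqxx !orbT.
case/setUP=> [xU | xU'].
  rewrite sideU //; case a_x: (connect g0 a x); first by rewrite connect_sym_tau connect_g0_tau.
  by have := connect_g0_a_or_b xU; rewrite a_x connect_sym_tau => /connect_g0_tau.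
rewrite sideU' //; case c_x: (connect g0 c x).
  by apply: connect_trans (connect1 tau_ca); rewrite connect_sym_tau connect_g0_tau.
apply: connect_trans (connect1 tau_db).
by rewrite connect_sym_tau connect_g0_tau // connect_g0_dE // c_x.
Qed.

(* Constant on the components of tau, which inside U :|: U' merges the parts of a and c,
   and those of b and d. *)
Definition label x : bool + {set T} :=
  if x \in U :|: U' then inl (side x) else inr [set y | connect g x y].

Lemma label_edge u v : tau u v -> label u = label v.
Proof.
rewrite two_switchE => /orP[/orP[g0uv | ac_uv] | bd_uv].
- have guv := g0_sub g0uv.
  rewrite /label !inE (component_closed sym_g compU guv) (component_closed sym_g compU' guv).
  rewrite /side !(same_connect1r connect_sym_g0 g0uv); case: ifP => // _; congr inr.
  by apply/setP => y; rewrite !inE (same_connect1 (sym_connect_sym sym_g) guv).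
- case/orP: ac_uv => /andP[/eqP-> /eqP->];
    by rewrite /label !inE aU cU' /side !connect0 !orbT.
- case/orP: bd_uv => /andP[/eqP-> /eqP->];
    rewrite /label !inE bU dU' orbT /side connect_g0_ab connect_g0_cd;
    by rewrite (connect_g0_UU' aU dU') (connect_g0_U'U cU' bU).
Qed.

Lemma connect_label u v : connect tau u v -> label u = label v.
Proof.
move=> cuv; have cl : closed tau [pred x | label x == label u].
  by move=> x y /label_edge; rewrite !inE => ->.
by have := closed_connect cl cuv; rewrite !inE eqxx => /esym/eqP.
Qed.

Lemma connect_on_cycle_label u v :
  (forall x y, on_cycle g x -> on_cycle g y -> x \in U -> y \in U' -> side x != side y) ->
  on_cycle g u -> on_cycle g v -> label u = label v -> connect g u v.
Proof.
move=> side_neq cyc_u cyc_v; rewrite /label.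
case: (boolP (u \in U :|: U')) => uUU'; case: (boolP (v \in U :|: U')) => vUU' // [] luv.
  case/setUP: uUU' => uS; case/setUP: vUU' => vS.
  - by rewrite -(mem_component v sym_g compU uS).
  - by have := side_neq u v cyc_u cyc_v uS vS; rewrite luv eqxx.
  - by have := side_neq v u cyc_v cyc_u vS uS; rewrite luv eqxx.
  - by rewrite -(mem_component v sym_g compU' uS).
by move/setP/(_ v): luv; rewrite !inE connect0.
Qed.

Lemma p_switchE u0 w0 : on_cycle g u0 -> u0 \in U -> on_cycle g w0 -> w0 \in U' ->
  p_switch g a b c d <-> connect g0 a u0 != connect g0 c w0.
Proof.
move=> cyc_u0 u0U cyc_w0 w0U'; rewrite -sideU // -sideU' //.
split=> [[_ pf_tau] | side_neq].
  apply/negP => /eqP side_eq.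
  have [u0UU' w0UU'] : u0 \in U :|: U' /\ w0 \in U :|: U' by rewrite !inE u0U w0U' orbT.
  have u0w0 : connect tau u0 w0.
    apply: connect_trans (connect_two_switch_side u0UU') _.
    by rewrite side_eq connect_sym_tau connect_two_switch_side.
  have [_ one_tau] := (pseudoforestP _).1 pf_tau.
  have [[s [cyc_s u0s]] [s' [cyc_s' w0s']]] := (cyc_u0, cyc_w0).
  have [s'U' _] := gcycle_component sym_g compU' cyc_s' w0s' w0U'.
  have := one_tau s s' u0 w0; rewrite !gcycle_two_switch => /(_ cyc_s cyc_s' u0s w0s' u0w0).
  by move/cycle_edges_mem/(_ u0s)/s'U'; apply/negP/notU'.
split; first exact: interchangeable_across.
apply/pseudoforestP; split; first exact: simple_two_switch.
move=> s s' u v /gcycle_two_switch cyc_s /gcycle_two_switch cyc_s' us vs' /connect_label luv.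
have [_ one_g] := (pseudoforestP g).1 pf_g.
apply: (one_g _ _ _ _ cyc_s cyc_s' us vs').
have [cyc_u cyc_v] : on_cycle g u /\ on_cycle g v by split; [exists s | exists s'].
apply: connect_on_cycle_label cyc_u cyc_v luv => x y cyc_x cyc_y xU yU'.
have x_u0 : connect g x u0 by rewrite -(mem_component _ sym_g compU xU).
have y_w0 : connect g y w0 by rewrite -(mem_component _ sym_g compU' yU').
by rewrite (side_on_cycle cyc_x cyc_u0 x_u0) (side_on_cycle cyc_y cyc_w0 y_w0).
Qed.

End SwitchAcrossComponents.

Theorem lemma4p6 (T : finType) (g : rel T) (a b c d : T) (U U' : {set T}) :
  pseudoforest g ->
  component g U -> component g U' ->
  unicyclic_on g U -> unicyclic_on g U' ->
  U != U' ->
  forest_edge g U a b -> forest_edge g U' c d ->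
  (p_switch g a b c d <-> ~ p_switch g a b d c).
Proof.
move=> pf_g compU compU' [_ [s [ind_s _]]] [_ [s' [ind_s' _]]] neqUU' fe_ab fe_cd.
have [[sym_g _] _] := pf_g.
have [[cyc_s sU] [cyc_s' s'U']] := (gcycle_induced ind_s, gcycle_induced ind_s').
have [[u0 u0s] [w0 w0s']] := (gcycle_head cyc_s, gcycle_head cyc_s').
have [cyc_u0 cyc_w0] : on_cycle g u0 /\ on_cycle g w0 by split; [exists s | exists s'].
have switchE := p_switchE pf_g compU compU' neqUU' fe_ab _ cyc_u0 (sU _ u0s) cyc_w0 (s'U' _ w0s').
rewrite (switchE c d fe_cd) (switchE d c (forest_edgeC sym_g fe_cd)).
rewrite !(eq_connect (del_edgeC _ c d)).
rewrite (connect_g0_dE pf_g compU compU' neqUU' fe_ab fe_cd (s'U' _ w0s')).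
by case: (connect _ a u0); case: (connect _ c w0); split.
Qed.
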